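(* Let $H$ be a real Hilbert space, $C\subseteq H$ nonempty, closed and convex, and $F:H\to H$ an operator such that (A1) $S_D\neq\emptyset$; (A2) $F$ is quasimonotone; (A3) $F$ is uniformly continuous on $H$. Let $\{z_n\},\{w_n\},\{\lambda_n\}$ be the sequences generated by Algorithm 3.1 (with $\epsilon=0$), assume $z_n\neq w_n$ for all $n$, and assume $\lambda_n\to0$ as $n\to\infty$. Let $I:=\{n\in\mathbb{N}:\lambda_{n+1}<\lambda_n\}$ and let $\{n_k\}_{k\ge1}$ be an enumeration of all indices in $I$. Then (i) $\lim_{k\to\infty}\frac{\|z_{n_k}-w_{n_k}\|}{\lambda_{n_k}}=0$; (ii) $\lim_{k\to\infty}\frac{\|z_{n_k+1}-z_{n_k}\|}{\lambda_{n_k}}=0$.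
   Context: $P_C$ denotes the metric projection onto $C$. $S_D$ is the set of $z\in C$ with $\langle F(v),v-z\rangle\ge0$ for all $v\in C$. $F$ is quasimonotone if $\langle F(w),z-w\rangle>0$ implies $\langle F(z),z-w\rangle\ge0$ for all $w,z\in H$. Algorithm 3.1 (with $\epsilon=0$): fix $\mu\in(0,1)$, a sequence $\{\xi_n\}\subset[0,\infty)$ with $\sum_{n}\xi_n<\infty$, $z_1\in H$ and $\lambda_1>0$. For $n=1,2,\dots$: $w_n=P_C(z_n-\lambda_nF(z_n))$; $z_{n+1}=w_n+\lambda_n(F(z_n)-F(w_n))$; $\lambda_{n+1}=\min\{\frac{\mu\|z_n-w_n\|}{\|F(z_n)-F(w_n)\|},\lambda_n+\xi_n\}$ if $F(z_n)\neq F(w_n)$, and $\lambda_{n+1}=\lambda_n+\xi_n$ otherwise. *)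

From HB Require Import structures.
From mathcomp Require Import all_boot all_order all_algebra.
From mathcomp Require Import all_classical all_reals all_analysis.
Set Implicit Arguments. Unset Strict Implicit. Unset Printing Implicit Defensive.
Import Order.TTheory GRing.Theory Num.Theory.
Import numFieldNormedType.Exports.
Local Open Scope classical_set_scope.
Local Open Scope ring_scope.

(* [ip] is a real inner product on V inducing the norm of V.
   Together with completeness of V this makes V a real Hilbert space. *)
Definition is_inner_product {R : realType} {V : normedModType R}
  (ip : V -> V -> R) : Prop :=
  (forall x y, ip x y = ip y x) /\
  (forall (a : R) x y z, ip (a *: x + y) z = a * ip x z + ip y z) /\
  (forall x, ip x x = `|x| ^+ 2).

Definition convex_subset {R : realType} {V : normedModType R} (C : set V) : Prop :=
  forall x y (t : R), C x -> C y -> 0 <= t <= 1 -> C (t *: x + (1 - t) *: y).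

Definition is_metric_proj {R : realType} {V : normedModType R}
  (C : set V) (x p : V) : Prop :=
  C p /\ forall y, C y -> `|x - p| <= `|x - y|.

Definition dual_solutions {R : realType} {V : normedModType R}
  (ip : V -> V -> R) (C : set V) (F : V -> V) : set V :=
  [set z | C z /\ forall v, C v -> 0 <= ip (F v) (v - z)].

Definition quasimonotone {R : realType} {V : normedModType R}
  (ip : V -> V -> R) (F : V -> V) : Prop :=
  forall w z, 0 < ip (F w) (z - w) -> 0 <= ip (F z) (z - w).

Definition unif_cont_on_H {R : realType} {V : normedModType R} (F : V -> V) : Prop :=
  forall e : R, 0 < e -> exists2 d : R, 0 < d &
    forall x y, `|x - y| < d -> `|F x - F y| < e.

(* The sequences (z, w, lam) are generated by Algorithm 3.1 with epsilon = 0.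
   Indices are shifted: z 0, w 0, lam 0 stand for z_1, w_1, lambda_1. *)
Definition algorithm31 {R : realType} {V : normedModType R}
  (C : set V) (F : V -> V) (mu : R) (xi : nat -> R)
  (z w : nat -> V) (lam : nat -> R) : Prop :=
  0 < lam 0 /\
  forall n,
    is_metric_proj C (z n - lam n *: F (z n)) (w n) /\
    z n.+1 = w n + lam n *: (F (z n) - F (w n)) /\
    lam n.+1 = (if F (z n) != F (w n)
                then Num.min (mu * `|z n - w n| / `|F (z n) - F (w n)|) (lam n + xi n)
                else lam n + xi n).

From HB Require Import structures.
From mathcomp Require Import all_boot all_order all_algebra.
From mathcomp Require Import all_classical all_reals all_analysis.
From mathcomp Require Import lra.
Import Order.TTheory GRing.Theory Num.Theory.
Import numFieldNormedType.Exports.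
Local Open Scope classical_set_scope.
Local Open Scope ring_scope.

(* On an index n with lam (n+1) < lam n the min in the step-size rule is attained at
   its first branch, so mu |z n - w n| = lam (n+1) |F (z n) - F (w n)|.  Uniform
   continuity makes F coarsely Lipschitz, |F x - F y| <= A |x - y| + 1, hence
   eventually |z n - w n| <= 2 lam (n+1) / mu, which tends to 0 along the indices in I;
   uniform continuity again gives |F (z n) - F (w n)| -> 0.  Dividing the identity by
   lam n > lam (n+1) gives (i), and (ii) follows from
   z (n+1) - z n = (w n - z n) + lam n (F (z n) - F (w n)). *)

Lemma cvg_comp_increasing {T : topologicalType} {u : nat -> T} {l : T} (phi : nat -> nat) :
  (forall k, (phi k < phi k.+1)%N) -> u @ \oo --> l -> u \o phi @ \oo --> l.
Proof.
move=> phi_incr ul; apply: cvg_comp ul; apply/cvgnyPge => N.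
have phi_ge k : (k <= phi k)%N.
  by elim: k => // k IHk; exact: leq_ltn_trans IHk (phi_incr k).
by exists N => // k /= Nk; exact: leq_trans Nk (phi_ge k).
Qed.

Section CoarseLipschitz.
Context {R : realType} {V : normedModType R} {F : V -> V}.

(* Split [x, y] at the point [m] at distance [d] from [x] and induct on [n]. *)
Lemma unif_cont_chain {d : R} {n : nat} {x y : V} : 0 < d ->
    (forall x y, `|x - y| <= d -> `|F x - F y| <= 1) ->
  `|x - y| <= n%:R * d -> `|F x - F y| <= n%:R.
Proof.
move=> d_gt0 Fd; elim: n x y => [|n IHn] x y.
  by rewrite mul0r normr_le0 subr_eq0 => /eqP ->; rewrite subrr normr0.
have [xy_le _|d_lt xy_le] := leP `|x - y| d.
  by apply: le_trans (Fd _ _ xy_le) _; rewrite ler1n.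
have xy_gt0 : 0 < `|x - y| by exact: lt_trans d_lt.
pose s := d / `|x - y|.
have s_ge0 : 0 <= s by rewrite divr_ge0 // ltW.
have s_le1 : s <= 1 by rewrite ler_pdivrMr // mul1r ltW.
pose m := x + s *: (y - x).
have xm : `|x - m| = d.
  by rewrite opprD addrA subrr sub0r normrN normrZ ger0_norm // distrC divfK ?gt_eqF.
have my : `|m - y| = `|x - y| - d.
  have -> : m - y = (1 - s) *: (x - y).
    by rewrite /m scalerBl scale1r -[y - x]opprB scalerN addrAC.
  by rewrite normrZ ger0_norm ?subr_ge0 // mulrBl mul1r divfK ?gt_eqF.
have -> : F x - F y = (F x - F m) + (F m - F y) by rewrite addrA subrK.
rewrite -natr1 [_ + 1]addrC; apply: le_trans (ler_normD _ _) (lerD _ _).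
  by apply: Fd; rewrite xm.
by apply: IHn; rewrite my lerBlDr (le_trans xy_le) // -natr1 mulrDl mul1r.
Qed.

Lemma unif_cont_coarse_lipschitz : unif_cont_on_H F ->
  exists2 A : R, 0 <= A & forall x y, `|F x - F y| <= A * `|x - y| + 1.
Proof.
move=> /(_ 1 ltr01) [D D_gt0 FD].
have d_gt0 : 0 < D / 2 by rewrite divr_gt0.
have Fd x y : `|x - y| <= D / 2 -> `|F x - F y| <= 1.
  move=> xy; apply/ltW/FD; apply: le_lt_trans xy _.
  by rewrite ltr_pdivrMr // ltr_pMr // ltr1n.
exists (D / 2)^-1 => [|x y]; first by rewrite invr_ge0 ltW.
pose r := `|x - y| / (D / 2).
have xy_le : `|x - y| <= (Num.truncn r).+1%:R * (D / 2).
  by rewrite -ler_pdivrMr //; apply/ltW; rewrite truncnS_gt // divr_ge0 // ltW.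
apply: le_trans (unif_cont_chain d_gt0 Fd xy_le) _.
by rewrite -natr1 lerD2r mulrC truncn_le divr_ge0 // ltW.
Qed.

Lemma unif_cont_cvg0 {x y : nat -> V} : unif_cont_on_H F ->
  `|x n - y n| @[n --> \oo] --> 0 -> `|F (x n) - F (y n)| @[n --> \oo] --> 0.
Proof.
move=> ucF /cvgr0Pnorm_lt xy0; apply/cvgr0Pnorm_lt => e e_gt0.
have [d d_gt0 Fd] := ucF e e_gt0.
by apply: filterS (xy0 d d_gt0) => n; rewrite !normr_id; exact: Fd.
Qed.

End CoarseLipschitz.

Lemma ge0_le_cvg0 {R : realType} {u v : nat -> R} :
  v @ \oo --> 0 -> (forall k, 0 <= u k <= v k) -> u @ \oo --> 0.
Proof.
move=> v0 uv; apply: (@squeeze_cvgr _ _ _ _ (fun=> 0) v) v0; last exact: cvg_cst.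
exact: nearW.
Qed.

Lemma le_mul_affine_cvg0 {R : realType} {mu A : R} {a l : nat -> R} :
  0 < mu -> 0 <= A -> (forall k, 0 <= a k) -> (forall k, 0 <= l k) ->
  l @ \oo --> 0 -> (forall k, mu * a k <= l k * (A * a k + 1)) ->
  a @ \oo --> 0.
Proof.
move=> mu_gt0 A_ge0 a_ge0 l_ge0 l0 le_al.
have lA0 : l k * A @[k --> \oo] --> 0 by rewrite -(mul0r A); exact: cvgMr_tmp.
apply: (@squeeze_cvgr _ _ _ _ (fun=> 0) (fun k => 2 / mu * l k)).
- near=> k; rewrite a_ge0 /= mulrAC ler_pdivlMr //.
  have lA : l k * A <= mu / 2.
    near: k; apply: filterS (cvgr0_norm_le _ lA0 _ (divr_gt0 mu_gt0 (ltr0Sn _ 1))) => k.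
    exact: le_trans (ler_norm _).
  have := le_al k; have := a_ge0 k; have := l_ge0 k; nra.
- exact: cvg_cst.
- by rewrite -(mulr0 (2 / mu)); exact: cvgMl_tmp.
Unshelve. all: by end_near.
Qed.

Section Algorithm31.
Context {R : realType} {V : normedModType R} {C : set V} {F : V -> V}.
Context {mu : R} {xi : nat -> R} {z w : nat -> V} {lam : nat -> R}.
Hypotheses (xi_ge0 : forall n, 0 <= xi n) (alg : algorithm31 C F mu xi z w lam).

Lemma algorithm31_lam_gt0 : 0 < mu -> (forall n, z n != w n) -> forall n, 0 < lam n.
Proof.
move=> mu_gt0 zw; case: alg => lam0_gt0 step; elim=> // n IHn.
have [_ [_ ->]] := step n.
have lam_xi : 0 < lam n + xi n by apply: lt_le_trans IHn _; rewrite lerDl.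
case: ifPn => // Fzw; rewrite lt_min lam_xi andbT.
by rewrite divr_gt0 ?mulr_gt0 ?normr_gt0 ?subr_eq0.
Qed.

Lemma algorithm31_lam_decr n : lam n.+1 < lam n ->
  mu * `|z n - w n| = lam n.+1 * `|F (z n) - F (w n)|.
Proof.
have [_ [_ ->]] := alg.2 n.
have lam_le : lam n <= lam n + xi n by rewrite lerDl.
case: ifPn => [Fzw|_ /lt_le_trans/(_ lam_le)]; last by rewrite ltxx.
rewrite /Num.min; case: ifPn => [_ _|_ /lt_le_trans/(_ lam_le)]; last by rewrite ltxx.
by rewrite divfK // normr_eq0 subr_eq0.
Qed.

Lemma algorithm31_ratio_le n : 0 < mu -> 0 < lam n.+1 -> lam n.+1 < lam n ->
  `|z n - w n| / lam n <= `|F (z n) - F (w n)| / mu.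
Proof.
move=> mu_gt0 lamS_gt0 lam_decr.
rewrite ler_pdivrMr ?(lt_trans lamS_gt0) // mulrAC ler_pdivlMr //.
rewrite mulrC algorithm31_lam_decr // mulrC ler_wpM2l //; exact: ltW.
Qed.

Lemma algorithm31_zS_ratio_le n : 0 < lam n ->
  `|z n.+1 - z n| / lam n <= `|z n - w n| / lam n + `|F (z n) - F (w n)|.
Proof.
move=> lam_gt0; have [_ [-> _]] := alg.2 n.
rewrite addrAC ler_pdivrMr // mulrDl divfK ?gt_eqF // [_ * lam n]mulrC.
apply: le_trans (ler_normD _ _) _.
by rewrite distrC normrZ ger0_norm // ltW.
Qed.

End Algorithm31.

Theorem lemma4p3 (R : realType) (V : completeNormedModType R)
  (ip : V -> V -> R) (C : set V) (F : V -> V)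
  (mu : R) (xi : nat -> R) (z w : nat -> V) (lam : nat -> R) (nk : nat -> nat) :
  is_inner_product ip ->
  C !=set0 -> closed C -> convex_subset C ->
  dual_solutions ip C F !=set0 ->
  quasimonotone ip F ->
  unif_cont_on_H F ->
  0 < mu < 1 ->
  (forall n, 0 <= xi n) -> cvg (series xi @ \oo) ->
  algorithm31 C F mu xi z w lam ->
  (forall n, z n != w n) ->
  lam @ \oo --> 0 ->
  (forall k, (nk k < nk k.+1)%N) ->
  (forall n, (exists k, nk k = n) <-> lam n.+1 < lam n) ->
  ((fun k => `|z (nk k) - w (nk k)| / lam (nk k)) @ \oo --> 0) /\
  ((fun k => `|z (nk k).+1 - z (nk k)| / lam (nk k)) @ \oo --> 0).
Proof.
move=> _ _ _ _ _ _ ucF /andP[mu_gt0 _] xi_ge0 _ alg zw lam0 nk_incr nkP.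
have lam_gt0 := algorithm31_lam_gt0 xi_ge0 alg mu_gt0 zw.
have lam_decr k : lam (nk k).+1 < lam (nk k) by apply/nkP; exists k.
have lamS0 : (fun n => lam n.+1) \o nk @ \oo --> 0.
  by apply: cvg_comp_increasing nk_incr _; rewrite cvg_shiftS.
pose a k := `|z (nk k) - w (nk k)|.
pose b k := `|F (z (nk k)) - F (w (nk k))|.
have [A A_ge0 lipF] := unif_cont_coarse_lipschitz ucF.
have a0 : a @ \oo --> 0.
  apply: (le_mul_affine_cvg0 mu_gt0 A_ge0 _ _ lamS0) => k.
  - exact: normr_ge0.
  - exact: ltW (lam_gt0 _).
  - rewrite (algorithm31_lam_decr xi_ge0 alg _ (lam_decr k)).
    by apply: ler_wpM2l; [exact: ltW | exact: lipF].
have b0 : b @ \oo --> 0 := unif_cont_cvg0 ucF a0.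
have ratio0 : a k / lam (nk k) @[k --> \oo] --> 0.
  have /ge0_le_cvg0 : b k / mu @[k --> \oo] --> 0.
    by rewrite -(mul0r mu^-1); exact: cvgMr_tmp.
  apply=> k; rewrite divr_ge0 ?normr_ge0 ?(ltW (lam_gt0 _)) //=.
  exact: (algorithm31_ratio_le xi_ge0 alg).
split=> //.
have /ge0_le_cvg0 : a k / lam (nk k) + b k @[k --> \oo] --> 0.
  by rewrite -(addr0 0); exact: cvgD.
apply=> k; rewrite divr_ge0 ?(ltW (lam_gt0 _)) //=.
exact: (algorithm31_zS_ratio_le alg).
Qed.
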